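(* Let $G$ be a finite non-abelian group such that $G/Z(G)\cong C_2\times C_2$. Then the non-centralizer graph $\Upsilon_G$ is regular.
   Context: For a finite group $G$, $C_G(x)$ denotes the centralizer of $x\in G$ and $Z(G)$ the center. The non-centralizer graph $\Upsilon_G$ is the simple graph with vertex set $G$ in which two distinct vertices $x,y$ are adjacent if and only if $C_G(x)\neq C_G(y)$. A graph is regular if all its vertices have the same degree. *)

From mathcomp Require Import all_boot all_fingroup all_solvable all_algebra.
Set Implicit Arguments. Unset Strict Implicit. Unset Printing Implicit Defensive.
Import GroupScope.

Definition noncent_adj (gT : finGroupType) (G : {set gT}) (x y : gT) : bool :=
  (x != y) && ('C_G[x] != 'C_G[y]).

Definition noncent_deg (gT : finGroupType) (G : {set gT}) (x : gT) : nat :=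
  #|[set y in G | noncent_adj G x y]|.

Definition noncent_regular (gT : finGroupType) (G : {set gT}) : Prop :=
  forall x y, x \in G -> y \in G -> noncent_deg G x = noncent_deg G y.

(** If |G : Z(G)| = 4 and x is not central, then Z(G) < C_G(x) < G forces
    |C_G(x) : Z(G)| = 2, so C_G(x) \ Z(G) is the single coset Z(G)x.
    Together with C_G(zx) = C_G(x) for central z, this shows that
    C_G(x) = C_G(y) exactly when Z(G)x = Z(G)y.  Hence x is adjacent in the
    non-centralizer graph precisely to the elements outside Z(G)x, and every
    vertex has degree |G| - |Z(G)|. *)

From mathcomp Require Import all_boot all_fingroup all_solvable all_algebra.
From mathcomp Require Import zify.
Import GroupScope.

Section CentraliserCosets.
Variables (gT : finGroupType) (G : {group gT}).

Lemma center_sub_subcent1 x : x \in G -> 'Z(G) \subset 'C_G[x].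
Proof. by move=> Gx; rewrite setIS // -cent_set1 centS // sub1set. Qed.

Lemma subcent1_fullP x : x \in G -> reflect ('C_G[x] = G) (x \in 'Z(G)).
Proof. by move=> Gx; rewrite [x \in _]inE Gx -sub_cent1; apply: setIidPl. Qed.

Lemma subcent1_rcoset_center x y : y \in 'Z(G) :* x -> 'C_G[y] = 'C_G[x].
Proof.
case/rcosetP=> z /centerP[_ cGz] ->; apply/setP=> g; rewrite !in_setI.
case Gg: (g \in G) => //=.
by rewrite !cent1E mulgA -(cGz g Gg) -!mulgA (inj_eq (mulgI z)).
Qed.

Hypothesis indexZ4 : #|G : 'Z(G)| = 4.

Lemma index_center_subcent1 x : x \in G :\: 'Z(G) -> #|'C_G[x] : 'Z(G)| = 2.
Proof.
case/setDP=> Gx notZx.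
have ZsubC : 'Z(G) \subset 'C_G[x] by exact: center_sub_subcent1.
have idxGC : #|G : 'C_G[x]| != 1%N.
  rewrite indexg_eq1 subsetIidl.
  by apply: contra notZx => /setIidPl /subcent1_fullP->.
have idxCZ : #|'C_G[x] : 'Z(G)| != 1%N.
  rewrite indexg_eq1; apply: contra notZx => /subsetP; apply.
  exact: subcent1_id.
have : (#|G : 'C_G[x]| * #|'C_G[x] : 'Z(G)|)%N = 4.
  by rewrite -indexZ4; apply: Lagrange_index ZsubC; apply: subcent1_sub.
move: idxGC idxCZ => /eqP ? /eqP ? ?; nia.
Qed.

Lemma eq_subcent1_rcoset x y :
  x \in G -> y \in G -> ('C_G[x] == 'C_G[y]) = (y \in 'Z(G) :* x).
Proof.
move=> Gx Gy; apply/eqP/idP=> [eqC | /subcent1_rcoset_center-> //].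
have [Zx | notZx] := boolP (x \in 'Z(G)).
  rewrite rcoset_id //; apply/(subcent1_fullP _ Gy).
  by rewrite -eqC; apply/subcent1_fullP.
have notZy : y \notin 'Z(G).
  apply: contra notZx => /(subcent1_fullP _ Gy).
  by rewrite -eqC => /(subcent1_fullP _ Gx).
have idxCZ : #|'C_G[x] : 'Z(G)| = 2.
  by apply: index_center_subcent1; rewrite inE notZx.
have CZx : x \in 'C_G[x] :\: 'Z(G) by rewrite inE notZx subcent1_id.
have CZy : y \in 'C_G[x] :\: 'Z(G) by rewrite in_setD notZy eqC subcent1_id.
by rewrite (rcoset_index2 (center_sub_subcent1 _ Gx) idxCZ CZx).
Qed.

Lemma noncent_adj_rcoset x y :
  x \in G -> y \in G -> noncent_adj G x y = (y \notin 'Z(G) :* x).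
Proof.
move=> Gx Gy; rewrite /noncent_adj eq_subcent1_rcoset //.
have [_ | notZxy] := boolP (y \in 'Z(G) :* x); rewrite ?andbF ?andbT //.
by apply: contraNneq notZxy => <-; apply: rcoset_refl.
Qed.

Lemma noncent_deg_index4 x : x \in G -> noncent_deg G x = (#|G| - #|'Z(G)|)%N.
Proof.
move=> Gx; have ZxG : 'Z(G) :* x \subset G.
  by rewrite -{2}(rcoset_id Gx) rcosetS center_sub.
rewrite /noncent_deg -(card_rcoset 'Z(G) x) -(setIidPr ZxG) -cardsD.
apply: eq_card => y; rewrite !inE.
by case Gy: (y \in G); rewrite ?andbF // andbT noncent_adj_rcoset.
Qed.

End CentraliserCosets.

Theorem theorem2p7 (gT : finGroupType) (G : {group gT}) :
  ~~ abelian G ->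
  (G / 'Z(G)) \isog [set: 'Z_2 * 'Z_2] ->
  noncent_regular G.
Proof.
move=> _ isoKlein x y Gx Gy.
have indexZ4 : #|G : 'Z(G)| = 4.
  rewrite -card_quotient ?normal_norm ?center_normal // (card_isog isoKlein).
  by rewrite cardsT card_prod card_ord.
by rewrite !noncent_deg_index4.
Qed.
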